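(* Let $\Omega\subset\mathbb{R}^n$ be a bounded, connected open set with $C^1$ boundary, let $\varphi\in\Phi_w(\Omega)$ and let $u\in BD^\varphi(\Omega)$. Then $$\|Eu\|_{\varrho_{\widetilde{V}^{n\times n}_\varphi}}\le\widetilde{V}^{n\times n}_\varphi(Eu)\le 2\,\|Eu\|_{\varrho_{\widetilde{V}^{n\times n}_\varphi}}.$$
   Context: A weak $\Phi$-function on $\Omega$ ($\varphi\in\Phi_w(\Omega)$) is a function $\varphi:\Omega\times[0,\infty)\to[0,\infty]$ such that: $x\mapsto\varphi(x,|f(x)|)$ is measurable for every measurable $f$; $t\mapsto\varphi(x,t)$ is non-decreasing for every $x$; $\varphi(x,0)=\lim_{t\to0^+}\varphi(x,t)=0$ and $\lim_{t\to\infty}\varphi(x,t)=\infty$ for every $x$; there is $L\ge1$ independent of $x$ with $\varphi(x,s)/s\le L\,\varphi(x,t)/t$ for $0<s\le t$. The conjugate is $\varphi^*(x,t)=\sup_{s\ge0}(st-\varphi(x,s))$. For measurable $f$ (scalar/vector/matrix valued, $|\cdot|$ Euclidean/Frobenius norm), $\|f\|_{\varphi}=\inf\{\lambda>0:\int_\Omega\varphi(x,|f|/\lambda)dx\le1\}$ and likewise $\|f\|_{\varphi^*}$; $L^\varphi(\Omega;\mathbb{R}^n)$ is the set of measurable $f$ with $\|f\|_\varphi<\infty$. For $v\in\mathcal{M}(\Omega;\mathbb{R}^{n\times n}_{\rm sym})$: $\widetilde{V}^{n\times n}_\varphi(v)=\sup\{\int_\Omega\psi:dv:\psi\in C^1_c(\Omega;\mathbb{R}^{n\times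 n}_{\rm sym}),\|\psi\|_{\varphi^*}\le1\}$ ($A:B=\mathrm{tr}(AB^T)$), $\varrho_{\widetilde{V}^{n\times n}_\varphi}(v)=\sup\{\int_\Omega\psi:dv-\int_\Omega\varphi^*(x,|\psi|)dx:\psi\in C^1_c(\Omega;\mathbb{R}^{n\times n}_{\rm sym})\}$, and $\|v\|_{\varrho_{\widetilde{V}^{n\times n}_\varphi}}=\inf\{\lambda>0:\varrho_{\widetilde{V}^{n\times n}_\varphi}(v/\lambda)\le1\}$. $Eu=\frac12(Du+Du^T)$ is the distributional symmetric gradient and $BD^\varphi(\Omega)=\{w\in L^\varphi(\Omega;\mathbb{R}^n):\|w\|_\varphi+\widetilde{V}^{n\times n}_\varphi(Ew)<\infty\}$. *)

From HB Require Import structures.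
From mathcomp Require Import all_boot all_order all_algebra.
From mathcomp Require Import all_classical all_reals all_analysis.
From mathcomp Require Import measurable_realfun.
Set Implicit Arguments. Unset Strict Implicit. Unset Printing Implicit Defensive.
Import Order.TTheory GRing.Theory Num.Theory.
Import numFieldNormedType.Exports.
Local Open Scope classical_set_scope.
Local Open Scope ring_scope.

(* R^n is modelled by row vectors 'rV[R]_n; we equip it with its Borel
   sigma-algebra (generated by the open sets). *)
Section borel_rV.
Variables (R : realType) (n : nat).
Definition borel_rV : set (set 'rV[R]_n) := <<s open >>.
HB.instance Definition _ := @isMeasurable.Build (sigma_display borel_rV)
  'rV[R]_n borel_rV (@sigma_algebra0 _ setT open) (@sigma_algebraC _ open)
  (@sigma_algebra_bigcup _ setT open).
End borel_rV.

Section defs.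
Variables (R : realType) (n : nat).
Local Notation pt := 'rV[R]_n.
Local Notation mat := 'M[R]_n.

(* mu is the n-dimensional Lebesgue measure: the (Borel) measure giving
   every half-open box its volume.  This characterizes it uniquely. *)
Definition is_lebesgue_rV (mu : {measure set pt -> \bar R}) : Prop :=
  forall a b : pt, (forall i, a 0 i <= b 0 i) ->
    mu [set x | forall i, a 0 i < x 0 i <= b 0 i] =
    (\prod_(i < n) (b 0 i - a 0 i))%:E.

Definition frob (p q : nat) (A : 'M[R]_(p, q)) : R :=
  Num.sqrt (\sum_(i < p) \sum_(j < q) A i j ^+ 2).

Definition evec (j : 'I_n) : pt := delta_mx 0 j.

Definition C1fun (g : pt -> R) : Prop :=
  continuous g /\
  forall j : 'I_n, (forall x, derivable g x (evec j)) /\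
                   continuous (fun x => 'D_(evec j) g x).

Definition C1c_sym (Omega : set pt) (psi : pt -> mat) : Prop :=
  [/\ forall x, (psi x)^T = psi x,
      forall i j, C1fun (fun x => psi x i j),
      compact (closure [set x | psi x != 0]) &
      closure [set x | psi x != 0] `<=` Omega].

(* C^1 boundary: near each boundary point, after a rigid motion, Omega is the
   region below the graph of a C^1 function of the remaining n-1 coordinates
   (that function is encoded as a C^1 function of the whole vector with the
   k-th coordinate set to 0). *)
Definition C1_boundary (Omega : set pt) : Prop :=
  forall x0, closure Omega x0 -> ~ Omega x0 ->
  exists (Q : mat) (k : 'I_n) (r : R) (g : pt -> R),
    [/\ Q *m Q^T = 1%:M, 0 < r, C1fun g &
        forall x, ball x0 r x ->
          (Omega x <->
           let y := (x - x0) *m Q in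
           y 0 k < g (\row_j (if j == k then 0 else y 0 j)))].

Definition weak_Phi (Omega : set pt) (phi : pt -> R -> \bar R) : Prop :=
  [/\ forall f : pt -> R, measurable_fun Omega f ->
        measurable_fun Omega ((fun x => phi x `|f x|) : pt -> \bar R),
      forall x, Omega x ->
        (forall t, 0 <= t -> (0 <= phi x t)%E) /\
        (forall s t, 0 <= s -> s <= t -> (phi x s <= phi x t)%E),
      forall x, Omega x -> phi x 0 = 0%E /\ phi x t @[t --> 0^'+] --> 0%E,
      forall x, Omega x -> phi x t @[t --> +oo] --> +oo%E &
      exists L : R, 1 <= L /\
        forall x, Omega x -> forall s t, 0 < s -> s <= t ->
          (phi x s * (s^-1)%:E <= L%:E * (phi x t * (t^-1)%:E))%E].

Definition conjugate (phi : pt -> R -> \bar R) : pt -> R -> \bar R :=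
  fun x t => ereal_sup [set ((s * t)%:E - phi x s)%E | s in [set s | 0 <= s]].

Variable mu : {measure set pt -> \bar R}.

(* Luxemburg norm of a nonnegative function g (g = |f|) on Omega *)
Definition lux (Omega : set pt) (phi : pt -> R -> \bar R) (g : pt -> R) : \bar R :=
  ereal_inf [set lam%:E | lam in
    [set lam : R | 0 < lam /\
       (\int[mu]_(x in Omega) phi x (g x / lam)%R <= 1)%E]].

(* the action  psi |-> \int_Omega psi : dEu  of the symmetric gradient,
   written distributionally:  - \int_Omega sum_{i,j} u_i d_j psi_ij dx *)
Definition symgrad (Omega : set pt) (u : pt -> pt) (psi : pt -> mat) : \bar R :=
  (\int[mu]_(x in Omega)
     (- \sum_(i < n) \sum_(j < n) u x 0 i * 'D_(evec j) (fun y => psi y i j) x)%R%:E)%E.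

(* For a linear functional v on test fields (a matrix-valued measure acting
   by psi |-> \int psi : dv): *)
Definition Vtilde (Omega : set pt) (phi : pt -> R -> \bar R)
    (v : (pt -> mat) -> \bar R) : \bar R :=
  ereal_sup [set v psi | psi in
    [set psi | C1c_sym Omega psi /\
       (lux Omega (conjugate phi) (fun x => frob (psi x)) <= 1)%E]].

Definition rhoV (Omega : set pt) (phi : pt -> R -> \bar R)
    (v : (pt -> mat) -> \bar R) : \bar R :=
  ereal_sup [set (v psi - \int[mu]_(x in Omega) conjugate phi x (frob (psi x)))%E
            | psi in C1c_sym Omega].

Definition rhoV_norm (Omega : set pt) (phi : pt -> R -> \bar R)
    (v : (pt -> mat) -> \bar R) : \bar R :=
  ereal_inf [set lam%:E | lam in
    [set lam : R | 0 < lam /\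
       (rhoV Omega phi (fun psi => (lam^-1)%:E * v psi) <= 1)%E]].

(* u in L^1_loc(Omega) (so that Eu is a distribution) *)
Definition loc_integrable (Omega : set pt) (u : pt -> pt) : Prop :=
  forall K, compact K -> K `<=` Omega ->
    mu.-integrable K (fun x => (frob (u x))%:E).

(* Eu is a (R^{n x n}_sym-valued Radon) measure on Omega: on each compact
   K of Omega the distribution is of order 0. *)
Definition symgrad_is_measure (Omega : set pt) (u : pt -> pt) : Prop :=
  forall K, compact K -> K `<=` Omega ->
  exists C : R, forall (psi : pt -> mat) (M : R),
    C1c_sym Omega psi -> closure [set x | psi x != 0] `<=` K ->
    (forall x, frob (psi x) <= M) ->
    (`| symgrad Omega u psi | <= (C * M)%:E)%E.

Definition BDphi (Omega : set pt) (phi : pt -> R -> \bar R) (u : pt -> pt) : Prop :=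
  [/\ measurable_fun Omega u,
      loc_integrable Omega u,
      symgrad_is_measure Omega u,
      (lux Omega phi (fun x => frob (u x)) < +oo)%E &
      (Vtilde Omega phi (symgrad Omega u) < +oo)%E].

End defs.

From HB Require Import structures.
From mathcomp Require Import all_boot all_order all_algebra.
From mathcomp Require Import all_classical all_reals all_analysis.
From mathcomp Require Import measurable_realfun.
Set Implicit Arguments. Unset Strict Implicit. Unset Printing Implicit Defensive.
Import Order.TTheory GRing.Theory Num.Theory.
Import numFieldNormedType.Exports.
Local Open Scope classical_set_scope.
Local Open Scope ring_scope.

(* Both inequalities only use that v = Eu is positively homogeneous on test
   fields and that phi^* >= 0 with phi^*(x, t/c) <= phi^*(x, t)/c for c >= 1.
   If Vtilde(v) = V is finite, a test field psi with I := int phi^*(|psi|)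
   gives psi/(1+I) in the unit ball of L^{phi^*}, so v(psi) <= (1+I) V and
   v(psi)/(V+e) - I <= 1: hence ||v|| <= V.  Conversely, if rho(v/l) <= 1
   and ||psi||_{phi^*} <= m, then testing rho(v/l) with psi/m gives
   v(psi)/(l m) <= 1 + int phi^*(|psi|/m) <= 2, whence V <= 2 l. *)

(* The integrands occurring below (u against derivatives of a test field,
   phi^* along a test field) are not known to be measurable, so scaling and
   monotonicity of the integral are proved from its definition as a
   supremum of integrals of simple functions. *)

Section integral_nonmeasurable.
Local Open Scope ereal_scope.
Context d (T : measurableType d) (R : realType).
Variable mu : {measure set T -> \bar R}.

Import HBNNSimple.

Definition sup_sintegral (f : T -> \bar R) := ereal_sup [set sintegral mu h |
  h in [set h : {nnsfun T >-> R} | forall x, (h x)%:E <= f x]].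

Lemma integral_sup_sintegral D f : \int[mu]_(x in D) f x =
  sup_sintegral ((f \_ D)^\+) - sup_sintegral ((f \_ D)^\-).
Proof. by []. Qed.

Lemma le_sup_sintegral f g : (forall x, f x <= g x) ->
  sup_sintegral f <= sup_sintegral g.
Proof.
move=> fg; apply: ge_ereal_sup => _ [h hf <-]; apply: ereal_sup_ubound.
by exists h => // x; exact: le_trans (hf x) (fg x).
Qed.

Lemma sup_sintegralZ (k : R) f : (0 < k)%R ->
  sup_sintegral (fun x => k%:E * f x) = k%:E * sup_sintegral f.
Proof.
have leZ (c : R) g : (0 < c)%R ->
    c%:E * sup_sintegral g <= sup_sintegral (fun x => c%:E * g x).
  move=> c0; rewrite -lee_pdivlMl//; apply: ge_ereal_sup => _ [h hg <-].
  rewrite lee_pdivlMl// -sintegralrM; apply: ereal_sup_ubound.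
  exists (scale_nnsfun h (ltW c0)) => //= x.
  by rewrite EFinM lee_pmul2l// ?lte_fin.
move=> k0; apply/le_anti; rewrite leZ// andbT -lee_pdivrMl//.
have := leZ k^-1%R (fun x => k%:E * f x) (ltac:(by rewrite invr_gt0)).
suff -> : (fun x => k^-1%:E * (k%:E * f x)) = f by [].
by apply/funext => x; rewrite muleA -EFinM mulVf ?gt_eqF// mul1e.
Qed.

Lemma gt0_muleBr (k : R) (a b : \bar R) : (0 < k)%R ->
  k%:E * (a - b) = k%:E * a - k%:E * b.
Proof.
move=> k0.
have ky : k%:E * +oo = +oo by rewrite gt0_muley ?lte_fin.
have kNy : k%:E * -oo = -oo by rewrite gt0_muleNy ?lte_fin.
case: a => [a||]; case: b => [b||];
  rewrite ?(EFinN, oppeK) /= ?(addeNy, addNye, addey, addye) //= ?ky ?kNy //=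
  ?(addeNy, addNye, addey, addye) //=.
by rewrite -EFinD -!EFinM -EFinD mulrBr.
Qed.

Lemma gt0_integralZl_nonmeas D (k : R) (f : T -> \bar R) : (0 < k)%R ->
  \int[mu]_(x in D) (k%:E * f x) = k%:E * \int[mu]_(x in D) f x.
Proof.
move=> k0; rewrite !integral_sup_sintegral.
have -> : (fun x => k%:E * f x) \_ D = (fun x => k%:E * (f \_ D) x).
  by apply/funext => x; rewrite /patch; case: ifP; rewrite ?mule0.
by rewrite ge0_funeposM ?ltW// ge0_funenegM ?ltW// !sup_sintegralZ// gt0_muleBr.
Qed.

Lemma ge0_le_integral_nonmeas D (f g : T -> \bar R) :
  (forall x, D x -> 0 <= f x) -> (forall x, D x -> f x <= g x) ->
  \int[mu]_(x in D) f x <= \int[mu]_(x in D) g x.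
Proof.
move=> f0 fg; have g0 x : D x -> 0 <= g x.
  by move=> Dx; exact: le_trans (f0 x Dx) (fg x Dx).
rewrite !ge0_integralE//; apply: le_sup_sintegral => x.
by rewrite /patch; case: ifP => // /set_mem; exact: fg.
Qed.

End integral_nonmeasurable.

Section test_fields.
Variables (R : realType) (n : nat).
Local Notation pt := 'rV[R]_n.
Local Notation mat := 'M[R]_n.

Lemma frob0 p q : frob (0 : 'M[R]_(p, q)) = 0.
Proof.
by rewrite /frob big1 ?sqrtr0// => i _; rewrite big1// => j _; rewrite mxE expr0n.
Qed.

Lemma frobZ p q (k : R) (A : 'M[R]_(p, q)) : 0 <= k -> frob (k *: A) = k * frob A.
Proof.
move=> k0; rewrite /frob.
have -> : \sum_(i < p) \sum_(j < q) (k *: A) i j ^+ 2 =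
    k ^+ 2 * \sum_(i < p) \sum_(j < q) A i j ^+ 2.
  rewrite mulr_sumr; apply: eq_bigr => i _; rewrite mulr_sumr.
  by apply: eq_bigr => j _; rewrite mxE exprMn.
by rewrite sqrtrM ?sqr_ge0// sqrtr_sqr ger0_norm.
Qed.

Lemma C1fun_cst (a : R) : C1fun (@cst pt R a).
Proof.
split=> [|j]; first exact: cst_continuous.
split=> [x|]; first exact: derivable_cst.
have -> : (fun x => 'D_(evec R j) (@cst pt R a) x) = cst 0.
  by apply/funext => x; rewrite derive_cst.
exact: cst_continuous.
Qed.

Lemma C1funZ (k : R) (g : pt -> R) : C1fun g -> C1fun (k \*: g).
Proof.
move=> [gc gd]; split=> [x|j]; first exact/continuousZl_tmp/gc.
have [gdj gdc] := gd j; split=> [x|]; first exact: derivableZ.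
have -> : (fun x => 'D_(evec R j) (k \*: g) x) =
    k \*: (fun x => 'D_(evec R j) g x).
  by apply/funext => x; rewrite deriveZ.
by move=> x; exact/continuousZl_tmp/gdc.
Qed.

Lemma entryZ (k : R) (psi : pt -> mat) i j :
  (fun y => (k *: psi y) i j) = k \*: (fun y => psi y i j).
Proof. by apply/funext => y; rewrite /= mxE. Qed.

Lemma C1c_sym0 (Omega : set pt) : C1c_sym Omega (fun _ => 0).
Proof.
rewrite /C1c_sym; have -> : [set x : pt | (0 : mat) != 0] = set0.
  by apply/seteqP; split=> x //=; rewrite eqxx.
split; rewrite ?closure0//; last exact: compact0.
- by move=> x; rewrite trmx0.
- move=> i j; have -> : (fun _ : pt => (0 : mat) i j) = cst 0.
    by apply/funext => x; rewrite mxE.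
  exact: C1fun_cst.
Qed.

Lemma C1c_symZ (Omega : set pt) (psi : pt -> mat) (k : R) : k != 0 ->
  C1c_sym Omega psi -> C1c_sym Omega (fun x => k *: psi x).
Proof.
move=> k0 [psiT psiC1 cpt sub].
have supp : [set x | k *: psi x != 0] = [set x | psi x != 0].
  by apply/funext => x /=; rewrite scaler_eq0 (negbTE k0).
split; rewrite ?supp//.
- by move=> x; rewrite linearZ /= psiT.
- by move=> i j; rewrite entryZ; exact: C1funZ.
Qed.

Variable mu : {measure set pt -> \bar R}.

Lemma symgrad0 (Omega : set pt) (u : pt -> pt) :
  symgrad mu Omega u (fun _ => 0) = 0%E.
Proof.
rewrite /symgrad integral0_eq// => x _.
rewrite big1 ?oppr0// => i _; rewrite big1// => j _.
have -> : (fun _ : pt => (0 : mat) i j) = cst 0 by apply/funext => y; rewrite mxE.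
by rewrite derive_cst mulr0.
Qed.

Lemma symgradZ (Omega : set pt) (u : pt -> pt) (k : R) (psi : pt -> mat) :
  0 < k -> C1c_sym Omega psi ->
  symgrad mu Omega u (fun x => k *: psi x) = (k%:E * symgrad mu Omega u psi)%E.
Proof.
move=> k0 [_ psiC1 _ _]; rewrite /symgrad -gt0_integralZl_nonmeas//.
apply: eq_integral => x _; rewrite -EFinM; congr (_%:E).
rewrite mulrN mulr_sumr; congr (- _); apply: eq_bigr => i _.
rewrite mulr_sumr; apply: eq_bigr => j _.
rewrite entryZ deriveZ; last by have [_ /(_ j) [+ _]] := psiC1 i j.
by rewrite mulrCA.
Qed.

End test_fields.

Section conjugate.
Variables (R : realType) (n : nat) (phi : 'rV[R]_n -> R -> \bar R) (x : 'rV[R]_n).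
Hypothesis phi0 : phi x 0 = 0%E.
Hypothesis phi_ge0 : forall t, 0 <= t -> (0 <= phi x t)%E.

Lemma conjugate_ge0 t : (0 <= conjugate phi x t)%E.
Proof.
by apply: ereal_sup_ubound; exists 0 => //=; rewrite mul0r phi0 subee.
Qed.

Lemma conjugate0 : conjugate phi x 0 = 0%E.
Proof.
apply/le_anti; rewrite conjugate_ge0 andbT.
apply: ge_ereal_sup => _ [s /= s0 <-].
by rewrite mulr0 sub0e oppe_le0 phi_ge0.
Qed.

Lemma conjugate_divr_le t c : 1 <= c ->
  (conjugate phi x (t / c) <= c^-1%:E * conjugate phi x t)%E.
Proof.
move=> c1; have c0 : 0 < c by exact: lt_le_trans c1.
apply: ge_ereal_sup => _ [s /= s0 <-].
apply: (@le_trans _ _ (c^-1%:E * ((s * t)%:E - phi x s))%E); last first.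
  rewrite lee_pmul2l ?lte_fin ?invr_gt0//.
  by apply: ereal_sup_ubound; exists s.
have := @phi_ge0 s s0; case: (phi x s) => [p||] //= p0; last first.
  by rewrite addeNy gt0_muleNy ?lte_fin ?invr_gt0.
rewrite -EFinB -EFinM lee_fin mulrBr lerB//; first by rewrite mulrA mulrC.
by rewrite ler_piMl// ?invf_le1// -lee_fin.
Qed.

End conjugate.

Section duality.
Variables (R : realType) (n : nat) (mu : {measure set 'rV[R]_n -> \bar R}).
Variables (Omega : set 'rV[R]_n) (phi : 'rV[R]_n -> R -> \bar R).
Variable v : ('rV[R]_n -> 'M[R]_n) -> \bar R.
Hypothesis phi0 : forall x, Omega x -> phi x 0 = 0%E.
Hypothesis phi_ge0 : forall x, Omega x -> forall t, 0 <= t -> (0 <= phi x t)%E.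
Hypothesis v0 : v (fun _ => 0) = 0%E.
Hypothesis vZ : forall k psi, 0 < k -> C1c_sym Omega psi ->
  v (fun x => k *: psi x) = (k%:E * v psi)%E.

Local Notation Vt := (Vtilde mu Omega phi v).
Local Notation rho_conj psi :=
  (\int[mu]_(x in Omega) conjugate phi x (frob (psi x)))%E.

Lemma rho_conj_ge0 (psi : 'rV[R]_n -> 'M[R]_n) : (0 <= rho_conj psi)%E.
Proof. by apply: integral_ge0 => x Ox; exact/conjugate_ge0/phi0. Qed.

Lemma le_Vtilde psi : C1c_sym Omega psi -> (rho_conj psi <= 1)%E ->
  (v psi <= Vt)%E.
Proof.
move=> psiC Ipsi; apply: ereal_sup_ubound; exists psi => //; split=> //.
apply: ereal_inf_lbound; exists 1 => //; split=> //.
by under eq_integral do rewrite divr1.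
Qed.

Lemma Vtilde_ge0 : (0 <= Vt)%E.
Proof.
rewrite -v0; apply/le_Vtilde; first exact: C1c_sym0.
rewrite integral0_eq// => x Ox.
by rewrite frob0 conjugate0//; [exact: phi0 | exact: phi_ge0].
Qed.

Lemma le_Vtilde_scaled psi (r : R) : C1c_sym Omega psi ->
  rho_conj psi = r%:E -> (v psi <= (1 + r)%:E * Vt)%E.
Proof.
move=> psiC Ir; have r0 : 0 <= r by rewrite -lee_fin -Ir rho_conj_ge0.
set c := 1 + r; have c1 : 1 <= c by rewrite lerDl.
have c0 : 0 < c by exact: lt_le_trans c1.
rewrite -lee_pdivrMl// -vZ ?invr_gt0//; apply: le_Vtilde.
  by apply: C1c_symZ => //; rewrite invr_eq0 gt_eqF.
apply: (@le_trans _ _ (c^-1%:E * rho_conj psi)%E).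
  rewrite -gt0_integralZl_nonmeas ?invr_gt0//.
  apply: ge0_le_integral_nonmeas => x Ox; first exact/conjugate_ge0/phi0.
  rewrite frobZ ?invr_ge0 ?(ltW c0)// mulrC.
  by apply: conjugate_divr_le => //; exact: phi_ge0.
by rewrite Ir -EFinM lee_fin ler_pdivrMl// mulr1 lerDr.
Qed.

Lemma rhoV_norm_le_Vtilde : (rhoV_norm mu Omega phi v <= Vt)%E.
Proof.
have := Vtilde_ge0; case EV: Vt => [V||] //= V0; last exact: leey.
apply/lee_addgt0Pr => e e0; rewrite lee_fin in V0.
have Ve0 : 0 < V + e by rewrite ltr_wpDl.
rewrite -EFinD; apply: ereal_inf_lbound; exists (V + e) => //; split=> //.
apply: ge_ereal_sup => _ [psi psiC <-].
have := rho_conj_ge0 psi.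
case EI: (rho_conj psi) => [r||] //= r0; last by rewrite addeNy leNye.
have vpsi : ((V + e)^-1%:E * v psi <= (1 + r)%:E)%E.
  rewrite lee_pdivrMl//; apply: (le_trans (le_Vtilde_scaled psiC EI)).
  rewrite EV -!EFinM lee_fin mulrC ler_wpM2r ?lerDl ?(ltW e0)//.
  by rewrite addr_ge0// -lee_fin.
by apply: (le_trans (leeB vpsi (le_refl r%:E))); rewrite -EFinB addrK.
Qed.

Lemma Vtilde_le_twice_rhoV_norm : (Vt <= 2%:E * rhoV_norm mu Omega phi v)%E.
Proof.
rewrite -lee_pdivrMl//; apply: le_ereal_inf_tmp => _ [l [l0 rhol] <-].
rewrite lee_pdivrMl//; apply: ge_ereal_sup => _ [psi [psiC lux1] <-].
rewrite -EFinM -[X in (_ <= X)%E]mule1 -lee_pdivrMl ?mulr_gt0//.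
apply: le_trans lux1; apply: le_ereal_inf_tmp => _ [m [m0 Im] <-].
have psimC : C1c_sym Omega (fun x => m^-1 *: psi x).
  by apply: C1c_symZ => //; rewrite invr_eq0 gt_eqF.
have scaled_le2 : ((l^-1)%:E * ((m^-1)%:E * v psi) <= 2%:E)%E.
  have : ((l^-1)%:E * v (fun x => m^-1 *: psi x)
         - rho_conj (fun x => m^-1 *: psi x) <= 1)%E.
    by apply: le_trans rhol; apply: ereal_sup_ubound; exists (fun x => m^-1 *: psi x).
  rewrite vZ ?invr_gt0// lee_subel_addr//.
  move/le_trans; apply; rewrite -[2%:E]/((1 + 1)%:E) EFinD leeD2l//.
  rewrite (eq_integral (fun x => conjugate phi x (frob (psi x) / m)))// => x _.
  by rewrite frobZ ?invr_ge0 ?(ltW m0)// mulrC.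
rewrite lee_pdivrMl ?mulr_gt0// -EFinM (_ : 2 * l * m = m * (l * 2)).
  by rewrite EFinM -lee_pdivrMl// EFinM -lee_pdivrMl.
by rewrite mulrC [l * 2]mulrC.
Qed.

End duality.

Theorem lemma3p12 (R : realType) (n : nat)
    (mu : {measure set 'rV[R]_n -> \bar R}) (Omega : set 'rV[R]_n)
    (phi : 'rV[R]_n -> R -> \bar R) (u : 'rV[R]_n -> 'rV[R]_n) :
  is_lebesgue_rV mu ->
  open Omega -> bounded_set Omega -> connected Omega -> C1_boundary Omega ->
  weak_Phi Omega phi ->
  BDphi mu Omega phi u ->
  (rhoV_norm mu Omega phi (symgrad mu Omega u)
     <= Vtilde mu Omega phi (symgrad mu Omega u))%E /\
  (Vtilde mu Omega phi (symgrad mu Omega u)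
     <= 2%:E * rhoV_norm mu Omega phi (symgrad mu Omega u))%E.
Proof.
move=> _ _ _ _ _ [_ phi_mono phi_lim0 _ _] _.
have phi_ge0 x : Omega x -> forall t, 0 <= t -> (0 <= phi x t)%E.
  by move=> Ox; have [] := phi_mono x Ox.
have phi0 x : Omega x -> phi x 0 = 0%E by move=> Ox; have [] := phi_lim0 x Ox.
have vZ := @symgradZ R n mu Omega u.
split; first exact: rhoV_norm_le_Vtilde phi0 phi_ge0 (symgrad0 mu Omega u) vZ.
exact: Vtilde_le_twice_rhoV_norm vZ.
Qed.
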